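(* Assume $-a_i+1\notin\mathbb{N}_0$ for $i\in\{1,\dots,M\}$, $-b_j\notin\mathbb{N}_0$ for $j\in\{1,\dots,N\}$, and that all denominators below are nonzero. Then for $n\in\mathbb{N}$ the Geronimus transformed orthogonal polynomials satisfy $$ {}_iT^{-1}P_n(z)=P_n(z)-\frac{Q_n(-a_i+1)}{Q_{n-1}(-a_i+1)}P_{n-1}(z),\qquad i\in\{1,\dots,M\},$$ $$T_j^{-1}P_n(z)=P_n(z)-\frac{Q_n(-b_j)}{Q_{n-1}(-b_j)}P_{n-1}(z),\qquad j\in\{1,\dots,N\},$$ $$T^{-1}P_n(z)=P_n(z-1)-\frac{\Upsilon Q_n(-1)-P_n(-1)}{\Upsilon Q_{n-1}(-1)-P_{n-1}(-1)}P_{n-1}(z-1),$$ where $\Upsilon:=\eta\,\prod_{i=1}^M(a_i-1)\big/\prod_{j=1}^N(b_j-1)$.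
   Context: Fix integers $M,N\ge0$ and parameters $\eta,a_1,\dots,a_M,b_1,\dots,b_N$. Let $w(z)=\frac{(a_1)_z\cdots(a_M)_z}{\Gamma(z+1)(b_1)_z\cdots(b_N)_z}\eta^z$, $(\alpha)_z=\Gamma(\alpha+z)/\Gamma(\alpha)$, on nodes $k\in\mathbb{N}_0$, with finite moments $\rho_n=\sum_kk^nw(k)$ and moment matrix $(\rho_{n+m})_{n,m\ge0}$ with all leading principal minors nonzero. $P_n$ is the monic polynomial of degree $n$ with $\sum_kP_n(k)P_m(k)w(k)=\delta_{n,m}H_n$, $H_n\ne0$, and $Q_n(z)=\sum_{k=0}^\infty\frac{P_n(k)w(k)}{z-k}$ is the second kind function. Inverse parameter shifts: ${}_iT^{-1}P_n$ is $P_n$ computed with $a_i$ replaced by $a_i-1$; $T_j^{-1}P_n$ with $b_j$ replaced by $b_j+1$; $T^{-1}P_n$ with every $a_i$ replaced by $a_i-1$ and every $b_j$ by $b_j-1$. It is assumed these shifted weights are well defined, with finite moments and nonzero Hankel determinants. *)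

From mathcomp Require Import all_boot all_order all_algebra.
Import Order.TTheory GRing.Theory Num.Theory.
From mathcomp Require Import complex.
From mathcomp Require Import all_classical all_reals all_analysis.

Set Implicit Arguments.
Unset Strict Implicit.
Unset Printing Implicit Defensive.

Import numFieldNormedType.Exports.
Local Open Scope ring_scope.

Definition csum_cvg (R : realType) (f : nat -> R[i]) : Prop :=
  cvgn (series (fun k => complex.Re (f k))) /\
  cvgn (series (fun k => complex.Im (f k))).

Definition csum (R : realType) (f : nat -> R[i]) : R[i] :=
  (limn (series (fun k => complex.Re (f k))) +i*
   limn (series (fun k => complex.Im (f k))))%C.

Definition poch (R : realType) (x : R[i]) (k : nat) : R[i] :=
  \prod_(l < k) (x + l%:R).

Definition weight (R : realType) (M N : nat) (eta : R[i])
    (a : 'I_M -> R[i]) (b : 'I_N -> R[i]) (k : nat) : R[i] :=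
  (\prod_(i < M) poch (a i) k) / (k`!%:R * \prod_(j < N) poch (b j) k)
  * eta ^+ k.

Definition moment (R : realType) (w : nat -> R[i]) (n : nat) : R[i] :=
  csum (fun k => (k%:R : R[i]) ^+ n * w k).

Definition moments_finite (R : realType) (w : nat -> R[i]) : Prop :=
  forall n, csum_cvg (fun k => (k%:R : R[i]) ^+ n * w k).

Definition hankel_nonzero (R : realType) (w : nat -> R[i]) : Prop :=
  forall n : nat, \det (\matrix_(i < n, j < n) moment w (i + j)%N) != 0.

Definition is_OPS (R : realType) (w : nat -> R[i])
    (P : nat -> {poly R[i]}) (H : nat -> R[i]) : Prop :=
  forall n, [/\ P n \is monic, size (P n) = n.+1, H n != 0 &
    forall m, csum (fun k => (P n).[k%:R] * (P m).[k%:R] * w k)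
              = if n == m then H n else 0].

Definition Qfun (R : realType) (w : nat -> R[i]) (P : nat -> {poly R[i]})
    (n : nat) (z : R[i]) : R[i] :=
  csum (fun k => (P n).[k%:R] * w k / (z - k%:R)).

Definition shift_a (R : realType) (M : nat) (i : 'I_M) (a : 'I_M -> R[i]) :
  'I_M -> R[i] := fun l => if l == i then a l - 1 else a l.
Definition shift_b (R : realType) (N : nat) (j : 'I_N) (b : 'I_N -> R[i]) :
  'I_N -> R[i] := fun l => if l == j then b l + 1 else b l.
Definition shift_all (R : realType) (K : nat) (c : 'I_K -> R[i]) :
  'I_K -> R[i] := fun l => c l - 1.

(* Every shifted weight is a Geronimus transform of w = weight eta a b. For
   a_i -> a_i - 1 and b_j -> b_j + 1 one has w'(k) = c w(k) / (k - z0) with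
   z0 = 1 - a_i resp. z0 = -b_j; for T^{-1} the weight is a unit mass at the
   node 0 plus w'(k + 1) = Ups w(k) / (k + 1), a Geronimus transform at z0 = -1
   of w read on the nodes shifted by one.
   Dividing q by X - z0, q = (X - z0) s + q(z0), gives
     <p, q>_w' = c (<p, s>_w - q(z0) sum_k p(k) w(k) / (z0 - k)),
   and the last sum is Q_n(z0) for p = P_n. For the monic p = P_n - A P_(n-1)
   and deg q < n the first term vanishes by w-orthogonality and the second one
   exactly when A = Q_n(z0) / Q_(n-1)(z0), so p is w'-orthogonal to all lower
   degrees and is therefore P'_n. For T^{-1} the unit mass adds p(-1) q(0),
   which shifts the choice of A accordingly. *)

From mathcomp Require Import all_boot all_order all_algebra.
Import Order.TTheory GRing.Theory Num.Theory.
From mathcomp Require Import complex.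
From mathcomp Require Import all_classical all_reals all_analysis.
From mathcomp Require Import ring.
Import numFieldNormedType.Exports.

Set Implicit Arguments.
Unset Strict Implicit.
Unset Printing Implicit Defensive.

Local Open Scope ring_scope.

Section ComplexSeries.
Variable R : realType.
Local Notation C := R[i].
Implicit Types (f g : nat -> C) (u : nat -> R).

Let ReM (x y : C) :
  complex.Re (x * y) = complex.Re x * complex.Re y - complex.Im x * complex.Im y.
Proof. by case: x => ? ?; case: y. Qed.

Let ImM (x y : C) :
  complex.Im (x * y) = complex.Re x * complex.Im y + complex.Im x * complex.Re y.
Proof. by case: x => ? ?; case: y. Qed.

Let Re_funD f g : (fun k => complex.Re (f k + g k)) =
  (fun k => complex.Re (f k)) + (fun k => complex.Re (g k)).
Proof. by apply/funext => k; exact: raddfD. Qed.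

Let Im_funD f g : (fun k => complex.Im (f k + g k)) =
  (fun k => complex.Im (f k)) + (fun k => complex.Im (g k)).
Proof. by apply/funext => k; exact: raddfD. Qed.

Let Re_funM c f : (fun k => complex.Re (c * f k)) =
  complex.Re c *: (fun k => complex.Re (f k)) - complex.Im c *: (fun k => complex.Im (f k)).
Proof. by apply/funext => k; exact: ReM. Qed.

Let Im_funM c f : (fun k => complex.Im (c * f k)) =
  complex.Re c *: (fun k => complex.Im (f k)) + complex.Im c *: (fun k => complex.Re (f k)).
Proof. by apply/funext => k; exact: ImM. Qed.

Lemma csum_cvgD f g : csum_cvg f -> csum_cvg g -> csum_cvg (fun k => f k + g k).
Proof.
by move=> [? ?] [? ?]; split; rewrite ?Re_funD ?Im_funD; exact: is_cvg_seriesD.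
Qed.

Lemma csumD f g : csum_cvg f -> csum_cvg g ->
  csum (fun k => f k + g k) = csum f + csum g.
Proof.
by move=> [? ?] [? ?]; rewrite /csum Re_funD Im_funD !lim_seriesD.
Qed.

Lemma csum_cvgZ c f : csum_cvg f -> csum_cvg (fun k => c * f k).
Proof.
move=> [? ?]; split; rewrite ?Re_funM ?Im_funM.
- by apply: is_cvg_seriesB; exact: is_cvg_seriesZ.
- by apply: is_cvg_seriesD; exact: is_cvg_seriesZ.
Qed.

Lemma csumZ c f : csum_cvg f -> csum (fun k => c * f k) = c * csum f.
Proof.
move=> [? ?]; rewrite /csum Re_funM Im_funM.
rewrite lim_seriesB ?lim_seriesD; try exact: is_cvg_seriesZ.
by rewrite !lim_seriesZ //; case: c.
Qed.

Let series0 : series (fun _ => 0 : R) = fun _ => 0.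
Proof. by apply/funext => n; rewrite /series /= big1. Qed.

Lemma csum_cvg0 : csum_cvg (fun _ => 0 : C).
Proof. by split; rewrite /= series0; exact: is_cvg_cst. Qed.

Lemma csum0 : csum (fun _ => 0 : C) = 0.
Proof. by rewrite /csum /= series0 lim_cst. Qed.

Lemma lim_series_shift u : cvgn (series u) ->
  cvgn (series (fun k => u k.+1)) /\
  limn (series u) = u 0%N + limn (series (fun k => u k.+1)).
Proof.
move=> cu.
have -> : series (fun k => u k.+1) = fun n => series u n.+1 - u 0%N.
  by apply/funext => n; rewrite /series /= big_nat_recl // addrC addKr.
have : ((fun n => series u n.+1 - u 0%N) @ \oo --> limn (series u) - u 0%N)%classic.
  by apply: cvgB; [rewrite cvg_shiftS; exact: cu | exact: cvg_cst].
move=> cvg_tail; split; first by apply/cvg_ex; eexists; exact: cvg_tail.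
by rewrite (cvg_lim _ cvg_tail) // addrC subrK.
Qed.

Lemma csum_shift f : csum_cvg f ->
  csum_cvg (fun k => f k.+1) /\ csum f = f 0%N + csum (fun k => f k.+1).
Proof.
move=> [/lim_series_shift[? eRe] /lim_series_shift[? eIm]]; split => //.
by rewrite /csum eRe eIm; case: (f 0%N).
Qed.

End ComplexSeries.

Lemma monic_coef_top (K : nzSemiRingType) (q : {poly K}) n :
  q \is monic -> size q = n.+1 -> q`_n = 1.
Proof. by move=> /monicP <- sq; rewrite lead_coefE sq. Qed.

Lemma size_sub_scale_monic (K : nzRingType) (p q : {poly K}) n :
  (size p <= n.+1)%N -> q \is monic -> size q = n.+1 ->
  (size (p - p`_n *: q)%R <= n)%N.
Proof.
move=> sp mq sq; have qn := monic_coef_top mq sq.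
apply/leq_sizeP => j; rewrite leq_eqVlt => /orP[/eqP<-|ltnj].
  by rewrite coefB coefZ qn mulr1 subrr.
have sq' : (size q <= n.+1)%N by rewrite sq.
by rewrite coefB coefZ (leq_sizeP _ _ sp) // (leq_sizeP _ _ sq') // mulr0 subrr.
Qed.

Section WeightedSums.
Variable R : realType.
Local Notation C := R[i].
Implicit Types (v w : nat -> C) (p q : {poly C}).

Definition wsum v p : C := csum (fun k => p.[k%:R] * v k).

Definition poly_summable v := forall p, csum_cvg (fun k => p.[k%:R] * v k).

Lemma moments_finite_summable w : moments_finite w -> poly_summable w.
Proof.
move=> mw p; elim/poly_ind: p w mw => [|p c IH] w mw.
  by under eq_fun do rewrite horner0 mul0r; exact: csum_cvg0.
have mXw : moments_finite (fun k => k%:R * w k).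
  by move=> m; under eq_fun do rewrite mulrA -exprSr; exact: mw.
under eq_fun do rewrite hornerMXaddC mulrDl -mulrA.
apply: csum_cvgD; first exact: IH.
apply: csum_cvgZ; suff -> : w = fun k => (k%:R : C) ^+ 0 * w k by exact: mw.
by apply/funext => k; rewrite expr0 mul1r.
Qed.

Lemma wsum_eq0 v p : (forall k, v k = 0) -> wsum v p = 0.
Proof. by move=> v0; rewrite /wsum -csum0; congr csum; apply/funext => k; rewrite v0 mulr0. Qed.

Lemma wsum0 v : wsum v 0 = 0.
Proof. by rewrite /wsum -csum0; congr csum; apply/funext => k; rewrite horner0 mul0r. Qed.

Lemma wsum_shift v p : poly_summable v ->
  wsum v p = p.[0] * v 0%N + wsum (fun k => v k.+1) (p \Po ('X + 1)).
Proof.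
move=> sv; rewrite /wsum (csum_shift (sv p)).2; congr (_ * _ + csum _).
by apply/funext => k; rewrite horner_comp !hornerE natr1.
Qed.

Lemma summable_shift v : poly_summable v -> poly_summable (fun k => v k.+1).
Proof.
move=> sv p; have := (csum_shift (sv (p \Po ('X - 1)))).1.
by under eq_fun do rewrite horner_comp !hornerE -natr1 addrK.
Qed.

Section Linearity.
Variable v : nat -> C.
Hypothesis sv : poly_summable v.

Lemma wsumD p q : wsum v (p + q) = wsum v p + wsum v q.
Proof.
rewrite /wsum -csumD //; congr csum.
by apply/funext => k; rewrite hornerD mulrDl.
Qed.

Lemma wsumZ c p : wsum v (c *: p) = c * wsum v p.
Proof.
rewrite /wsum -csumZ //; congr csum.
by apply/funext => k; rewrite hornerZ mulrA.
Qed.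

Lemma wsumB p q : wsum v (p - q) = wsum v p - wsum v q.
Proof. by rewrite -scaleN1r wsumD wsumZ mulN1r. Qed.

End Linearity.

Lemma Qfun_wsum w P n z : Qfun w P n z = wsum (fun k => w k / (z - k%:R)) (P n).
Proof. by rewrite /Qfun /wsum; congr csum; apply/funext => k; rewrite mulrA. Qed.

End WeightedSums.

Section OrthogonalPolynomials.
Variable R : realType.
Local Notation C := R[i].
Variables (w : nat -> C) (P : nat -> {poly C}) (H : nat -> C).
Implicit Types q : {poly C}.
Hypotheses (sw : poly_summable w) (hP : is_OPS w P H).

Lemma size_OPS n : size (P n) = n.+1.
Proof. by have [] := hP n. Qed.

Lemma monic_OPS n : P n \is monic.
Proof. by have [] := hP n. Qed.

Lemma wsum_OPS n m : wsum w (P n * P m) = if n == m then H n else 0.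
Proof.
have [_ _ _ <-] := hP n.
by rewrite /wsum; congr csum; apply/funext => k; rewrite hornerM.
Qed.

Lemma wsum_OPS_low m q : (size q <= m)%N -> wsum w (P m * q) = 0.
Proof.
suff low n : (n <= m)%N -> (size q <= n)%N -> wsum w (P m * q) = 0 by apply: low.
elim: n q => [|n IH] q le_nm sq.
  by move: sq; rewrite leqn0 size_poly_eq0 => /eqP->; rewrite mulr0 wsum0.
have -> : P m * q = q`_n *: (P m * P n) + P m * (q - q`_n *: P n).
  by rewrite mulrBr scalerAr addrC subrK.
rewrite wsumD // wsumZ // wsum_OPS IH ?(ltnW le_nm) //; last first.
  by apply: size_sub_scale_monic; rewrite ?monic_OPS ?size_OPS.
by rewrite gtn_eqF // mulr0 addr0.
Qed.

Lemma OPS_orth_eq0 n q : (size q <= n)%N ->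
  (forall m, (m < n)%N -> wsum w (P m * q) = 0) -> q = 0.
Proof.
elim: n q => [|n IH] q sq orth.
  by apply/eqP; rewrite -size_poly_eq0 -leqn0.
have sq' : (size (q - q`_n *: P n)%R <= n)%N.
  by apply: size_sub_scale_monic; rewrite ?monic_OPS ?size_OPS.
have Hn : H n != 0 by have [] := hP n.
have qn : q`_n = 0.
  have : wsum w (P n * q) = q`_n * H n.
    have -> : P n * q = q`_n *: (P n * P n) + P n * (q - q`_n *: P n).
      by rewrite mulrBr scalerAr addrC subrK.
    by rewrite wsumD // wsumZ // wsum_OPS eqxx wsum_OPS_low // addr0.
  by rewrite orth // => /esym/eqP; rewrite mulf_eq0 (negbTE Hn) orbF => /eqP.
apply: IH => [|m lt_mn]; first by rewrite qn scale0r subr0 in sq'.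
by apply: orth; exact: ltnW.
Qed.

Lemma OPS_unique n Q : Q \is monic -> size Q = n.+1 ->
  (forall q, (size q <= n)%N -> wsum w (Q * q) = 0) -> Q = P n.
Proof.
move=> mQ sQ orthQ; apply/eqP; rewrite -subr_eq0; apply/eqP.
apply: (@OPS_orth_eq0 n) => [|m lt_mn].
  have := @size_sub_scale_monic _ Q (P n) n.
  by rewrite (monic_coef_top mQ sQ) scale1r sQ; apply; rewrite ?monic_OPS ?size_OPS.
by rewrite mulrBr wsumB // mulrC orthQ ?size_OPS // wsum_OPS ltn_eqF // subr0.
Qed.

Let size_OPS_kernel_tail n A : (0 < n)%N -> (size (- (A *: P n.-1)) < size (P n))%N.
Proof.
by move=> n0; rewrite size_polyN (leq_ltn_trans (size_scale_leq _ _)) // !size_OPS prednK.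
Qed.

Lemma size_OPS_kernel n A : (0 < n)%N -> size (P n - A *: P n.-1) = n.+1.
Proof. by move=> n0; rewrite size_polyDl ?size_OPS_kernel_tail ?size_OPS. Qed.

Lemma monic_OPS_kernel n A : (0 < n)%N -> P n - A *: P n.-1 \is monic.
Proof.
by move=> n0; apply/monicP; rewrite lead_coefDl ?size_OPS_kernel_tail ?(monicP (monic_OPS n)).
Qed.

Lemma wsum_OPS_kernel_low n A q : (size q <= n.-1)%N ->
  wsum w ((P n - A *: P n.-1) * q) = 0.
Proof.
move=> sq; rewrite mulrBl -scalerAl wsumB // wsumZ // !wsum_OPS_low //.
  by rewrite mulr0 subr0.
exact: leq_trans sq (leq_pred n).
Qed.

End OrthogonalPolynomials.

Section Geronimus.
Variable R : realType.
Local Notation C := R[i].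
Variables (w w' : nat -> C) (c z0 : C) (P : nat -> {poly C}) (H : nat -> C).
Implicit Types p q : {poly C}.
Hypotheses (sw : poly_summable w) (sw' : poly_summable w') (hP : is_OPS w P H).
Hypothesis z0_notin_nodes : forall k : nat, k%:R - z0 != 0.
Hypothesis w'E : forall k : nat, w' k = c * w k / (k%:R - z0).

Local Notation cauchy := (fun k => w k / (z0 - k%:R)).

Let z0_notin_nodes' k : z0 - k%:R != 0.
Proof. by rewrite -oppr_eq0 opprB. Qed.

Lemma summable_cauchy : c != 0 -> poly_summable cauchy.
Proof.
move=> c0 p; have -> : (fun k => p.[k%:R] * cauchy k) = fun k => - c^-1 * (p.[k%:R] * w' k).
  by apply/funext => k; rewrite w'E; field; rewrite c0 z0_notin_nodes z0_notin_nodes'.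
exact: csum_cvgZ.
Qed.

Lemma wsum_geronimus p q : c != 0 ->
  wsum w' (p * q) = c * (wsum w (p * (q %/ ('X - z0%:P))) - q.[z0] * wsum cauchy p).
Proof.
move=> c0; set s := q %/ ('X - z0%:P).
have qE : q = s * ('X - z0%:P) + q.[z0]%:P by rewrite -modp_XsubC -divp_eq.
have -> : c * (wsum w (p * s) - q.[z0] * wsum cauchy p) =
          c * wsum w (p * s) + - (c * q.[z0]) * wsum cauchy p by ring.
have scauchy := summable_cauchy c0.
rewrite /wsum -!csumZ // -csumD; try exact: csum_cvgZ.
congr csum; apply/funext => k.
rewrite w'E {1}qE hornerM hornerD !hornerM hornerXsubC hornerC.
by field; rewrite z0_notin_nodes z0_notin_nodes'.
Qed.

Lemma wsum_geronimus_kernel n A q : (0 < n)%N -> (size q <= n)%N ->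
  wsum w' ((P n - A *: P n.-1) * q) =
  - c * q.[z0] * (Qfun w P n z0 - A * Qfun w P n.-1 z0).
Proof.
move=> n0 sq; have [c0|c0] := eqVneq c 0.
  by rewrite wsum_eq0 ?c0 ?oppr0 ?mul0r // => k; rewrite w'E c0 !mul0r.
rewrite wsum_geronimus // (wsum_OPS_kernel_low sw hP); last first.
  by rewrite size_divp -?size_poly_eq0 size_XsubC // subn1 -!subn1 leq_sub2r.
have scauchy := summable_cauchy c0.
rewrite !Qfun_wsum wsumB // wsumZ //.
by ring.
Qed.

Lemma geronimus_OPS P' H' : is_OPS w' P' H' -> forall n, (0 < n)%N ->
  Qfun w P n.-1 z0 != 0 ->
  P' n = P n - (Qfun w P n z0 / Qfun w P n.-1 z0) *: P n.-1.
Proof.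
move=> hP' n n0 Q0; symmetry; apply: (OPS_unique sw' hP').
- exact: monic_OPS_kernel.
- exact: size_OPS_kernel.
by move=> q sq; rewrite wsum_geronimus_kernel // divfK // subrr mulr0.
Qed.

End Geronimus.

Section PointMassGeronimus.
Variable R : realType.
Local Notation C := R[i].
Variables (w w' : nat -> C) (U : C) (P P' : nat -> {poly C}) (H H' : nat -> C).
Hypotheses (sw : poly_summable w) (sw' : poly_summable w').
Hypotheses (hP : is_OPS w P H) (hP' : is_OPS w' P' H').
Hypotheses (w'0 : w' 0%N = 1) (w'S : forall k : nat, w' k.+1 = U * w k / k.+1%:R).

Let size_XsubC1 : size ('X - 1 : {poly C}) = 2.
Proof. by rewrite -polyC1 size_XsubC. Qed.

Let size_XaddC1 : size ('X + 1 : {poly C}) = 2.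
Proof. by rewrite -polyC1 size_XaddC. Qed.

Let XsubC1_comp_XaddC1 : ('X - 1) \Po ('X + 1) = 'X :> {poly C}.
Proof. by rewrite comp_polyB comp_polyX -polyC1 comp_polyC addrK. Qed.

Let m1_notin_nodes k : k%:R - -1 != 0 :> C.
Proof. by rewrite opprK natr1 pnatr_eq0. Qed.

Let w'S_m1 k : w' k.+1 = U * w k / (k%:R - -1).
Proof. by rewrite w'S opprK natr1. Qed.

Lemma point_mass_geronimus_OPS n : (0 < n)%N ->
  U * Qfun w P n.-1 (-1) - (P n.-1).[-1] != 0 ->
  P' n = P n \Po ('X - 1)
         - ((U * Qfun w P n (-1) - (P n).[-1])
            / (U * Qfun w P n.-1 (-1) - (P n.-1).[-1])) *: (P n.-1 \Po ('X - 1)).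
Proof.
move=> n0 D0; set A := (_ / _).
have hA : A * (U * Qfun w P n.-1 (-1) - (P n.-1).[-1]) = U * Qfun w P n (-1) - (P n).[-1].
  by rewrite divfK.
rewrite -comp_polyZ -comp_polyB; set K := P n - A *: P n.-1.
symmetry; apply: (OPS_unique sw' hP').
- apply/monicP; rewrite lead_coef_comp ?size_XsubC1 //.
  by rewrite (monicP (monic_OPS_kernel hP _ n0)) -polyC1 lead_coefXsubC expr1n mulr1.
- by rewrite size_comp_poly2 // (size_OPS_kernel hP).
move=> q sq; rewrite wsum_shift //.
rewrite comp_polyM -comp_polyA XsubC1_comp_XaddC1 comp_polyXr.
rewrite (wsum_geronimus_kernel sw (summable_shift sw') hP m1_notin_nodes w'S_m1 _ n0);
  last by rewrite size_comp_poly2.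
rewrite hornerM !horner_comp !hornerE w'0 mulr1 addNr.
transitivity (q.[0] * (A * (U * Qfun w P n.-1 (-1) - (P n.-1).[-1])
                       - (U * Qfun w P n (-1) - (P n).[-1]))); first by ring.
by rewrite hA subrr mulr0.
Qed.

End PointMassGeronimus.

Section HypergeometricWeight.
Variable R : realType.
Local Notation C := R[i].

Lemma poch0 (x : C) : poch x 0 = 1.
Proof. by rewrite /poch big_ord0. Qed.

Lemma pochS (x : C) k : poch x k.+1 = x * poch (x + 1) k.
Proof.
rewrite /poch big_ord_recl addr0; congr (_ * _).
by apply: eq_bigr => l _; rewrite lift0 -natr1 addrA [RHS]addrAC.
Qed.

Lemma pochSr (x : C) k : poch x k.+1 = poch x k * (x + k%:R).
Proof. by rewrite /poch big_ord_recr. Qed.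

Variables (M N : nat) (eta : C) (a : 'I_M -> C) (b : 'I_N -> C).

Lemma weight_shift_a i k : k%:R - (1 - a i) != 0 ->
  weight eta (shift_a i a) b k = (a i - 1) * weight eta a b k / (k%:R - (1 - a i)).
Proof.
rewrite opprB addrC => nz.
rewrite /weight (bigD1 i) //= [in RHS](bigD1 i) //= {1}/shift_a eqxx.
rewrite (eq_bigr (fun l => poch (a l) k)); last by move=> l /negbTE; rewrite /shift_a => ->.
have -> : poch (a i - 1) k = (a i - 1) * poch (a i) k / (a i - 1 + k%:R).
  by have := pochS (a i - 1) k; rewrite subrK pochSr => <-; rewrite mulfK.
move: (poch (a i) k) (\prod_(l < M | l != i) _) (_ * \prod_(j < N) _) (eta ^+ k) => x y z t.
by rewrite /=; ring.
Qed.

Lemma weight_shift_b j k : b j != 0 ->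
  weight eta a (shift_b j b) k = b j * weight eta a b k / (k%:R - - b j).
Proof.
move=> b0; rewrite opprK addrC.
rewrite /weight (bigD1 j) //= [in RHS](bigD1 j) //= {1}/shift_b eqxx.
rewrite (eq_bigr (fun l => poch (b l) k)); last by move=> l /negbTE; rewrite /shift_b => ->.
have -> : poch (b j + 1) k = poch (b j) k * (b j + k%:R) / b j.
  by rewrite -pochSr pochS [b j * _]mulrC mulfK.
move: (poch (b j) k) (\prod_(l < N | l != j) _) (k`!%:R : C) (eta ^+ k) (\prod_(i < M) _) => x y z t u.
by rewrite !invfM invrK; ring.
Qed.

Lemma weight_shift_all0 : weight eta (shift_all a) (shift_all b) 0 = 1.
Proof.
by rewrite /weight !big1 ?expr0 ?mulr1 ?invr1 ?mul1r // => l _; rewrite poch0.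
Qed.

Lemma weight_shift_allS k : weight eta (shift_all a) (shift_all b) k.+1 =
  eta * (\prod_(i < M) (a i - 1)) / (\prod_(j < N) (b j - 1)) * weight eta a b k / k.+1%:R.
Proof.
rewrite /weight /shift_all.
rewrite (eq_bigr (fun l => (a l - 1) * poch (a l) k)); last by move=> l _; rewrite pochS subrK.
rewrite [X in _ / (_ * X) * _](eq_bigr (fun l => (b l - 1) * poch (b l) k)); last first.
  by move=> l _; rewrite pochS subrK.
rewrite !big_split /= factS natrM exprS.
move: (\prod_(i < M) (a i - 1)) (\prod_(i < M) poch (a i) k) (\prod_(i < N) (b i - 1))
  (\prod_(i < N) poch (b i) k) (k`!%:R : C) (eta ^+ k) (k.+1%:R : C) => x y z t u v r.
by rewrite !invfM; ring.
Qed.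

End HypergeometricWeight.

Theorem mainTheorem6 (R : realType) (M N : nat) (eta : R[i])
    (a : 'I_M -> R[i]) (b : 'I_N -> R[i])
    (P : nat -> {poly R[i]}) (H : nat -> R[i]) :
  (forall (i : 'I_M) (m : nat), 1 - a i != m%:R) ->
  (forall (j : 'I_N) (m : nat), - b j != m%:R) ->
  moments_finite (weight eta a b) ->
  hankel_nonzero (weight eta a b) ->
  is_OPS (weight eta a b) P H ->
  (* Geronimus transformation a_i -> a_i - 1 *)
  [/\ (forall (i : 'I_M) (P' : nat -> {poly R[i]}) (H' : nat -> R[i]),
        moments_finite (weight eta (shift_a i a) b) ->
        hankel_nonzero (weight eta (shift_a i a) b) ->
        is_OPS (weight eta (shift_a i a) b) P' H' ->
        forall n : nat, (0 < n)%N ->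
        Qfun (weight eta a b) P n.-1 (1 - a i) != 0 ->
        P' n = P n - (Qfun (weight eta a b) P n (1 - a i)
                      / Qfun (weight eta a b) P n.-1 (1 - a i)) *: P n.-1),
  (* Geronimus transformation b_j -> b_j + 1 *)
      (forall (j : 'I_N) (P' : nat -> {poly R[i]}) (H' : nat -> R[i]),
        moments_finite (weight eta a (shift_b j b)) ->
        hankel_nonzero (weight eta a (shift_b j b)) ->
        is_OPS (weight eta a (shift_b j b)) P' H' ->
        forall n : nat, (0 < n)%N ->
        Qfun (weight eta a b) P n.-1 (- b j) != 0 ->
        P' n = P n - (Qfun (weight eta a b) P n (- b j)
                      / Qfun (weight eta a b) P n.-1 (- b j)) *: P n.-1) &
  (* T^{-1}: all a_i -> a_i - 1 and all b_j -> b_j - 1 *)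
      (forall (P' : nat -> {poly R[i]}) (H' : nat -> R[i]),
        moments_finite (weight eta (shift_all a) (shift_all b)) ->
        hankel_nonzero (weight eta (shift_all a) (shift_all b)) ->
        is_OPS (weight eta (shift_all a) (shift_all b)) P' H' ->
        \prod_(j < N) (b j - 1) != 0 ->
        let Ups := eta * (\prod_(i < M) (a i - 1)) / \prod_(j < N) (b j - 1) in
        forall n : nat, (0 < n)%N ->
        Ups * Qfun (weight eta a b) P n.-1 (-1) - (P n.-1).[-1] != 0 ->
        P' n = P n \Po ('X - 1)
               - ((Ups * Qfun (weight eta a b) P n (-1) - (P n).[-1])
                  / (Ups * Qfun (weight eta a b) P n.-1 (-1) - (P n.-1).[-1]))
                 *: (P n.-1 \Po ('X - 1)))].
Proof.
(* The Hankel conditions only guarantee that the families P and P' exist. *)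
move=> a_notin b_notin mw _ hP; have sw := moments_finite_summable mw.
split.
- move=> i P' H' mw' _ hP' n n0 Q0.
  have notin k : k%:R - (1 - a i) != 0 by rewrite subr_eq0 eq_sym a_notin.
  have w'E k := weight_shift_a eta b (notin k).
  exact: (geronimus_OPS sw (moments_finite_summable mw') hP notin w'E hP').
- move=> j P' H' mw' _ hP' n n0 Q0.
  have notin k : k%:R - - b j != 0 by rewrite subr_eq0 eq_sym b_notin.
  have b0 : b j != 0 by rewrite -oppr_eq0 (b_notin j 0%N).
  have w'E k := weight_shift_b eta a k b0.
  exact: (geronimus_OPS sw (moments_finite_summable mw') hP notin w'E hP').
- move=> P' H' mw' _ hP' _ Ups n n0 D0.
  have w'S k := weight_shift_allS eta a b k.
  exact: (point_mass_geronimus_OPS sw (moments_finite_summable mw') hP hP'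
            (weight_shift_all0 _ _ _) w'S n0 D0).
Qed.
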